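(* If a first-order theory $T$ is positively model-complete, then every homomorphism between models of $T$ is elementary.
   Context: A homomorphism of $\mathscr L$-structures preserves atomic sentences with parameters; it is elementary if it preserves (and reflects) all first-order sentences with parameters. A homomorphism $f:A\to B$ is an immersion if for every positive existential (coherent) sentence $\phi(\bar a)$ with parameters in $A$ — a prenex existential formula containing no negation — $B\models\phi(f\bar a)$ implies $A\models\phi(\bar a)$. $T$ is positively model-complete if every homomorphism between models of $T$ is an immersion. *)

From Stdlib Require Import Fin.

Set Implicit Arguments.

Record language := {
  fsym : Type;
  fari : fsym -> nat;
  rsym : Type;
  rari : rsym -> nat
}.

Inductive term (L : language) : Type :=
| tvar : nat -> term L
| tapp : forall f : fsym L, (Fin.t (fari L f) -> term L) -> term L.

Inductive formula (L : language) : Type :=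
| fEq  : term L -> term L -> formula L
| fRel : forall r : rsym L, (Fin.t (rari L r) -> term L) -> formula L
| fTrue : formula L
| fFalse : formula L
| fNot : formula L -> formula L
| fAnd : formula L -> formula L -> formula L
| fOr  : formula L -> formula L -> formula L
| fImp : formula L -> formula L -> formula L
| fEx  : nat -> formula L -> formula L
| fAll : nat -> formula L -> formula L.

Arguments tvar {L}.
Arguments fTrue {L}.
Arguments fFalse {L}.

Fixpoint term_var L (x : nat) (t : term L) : Prop :=
  match t with
  | tvar y => x = y
  | tapp f ts => exists i, term_var x (ts i)
  end.

Fixpoint free L (x : nat) (phi : formula L) : Prop :=
  match phi with
  | fEq t u => term_var x t \/ term_var x u
  | fRel r ts => exists i, term_var x (ts i)
  | fTrue | fFalse => False
  | fNot p => free x p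
  | fAnd p q | fOr p q | fImp p q => free x p \/ free x q
  | fEx y p | fAll y p => x <> y /\ free x p
  end.

Definition sentence L (phi : formula L) : Prop := forall x, ~ free x phi.

Record structure (L : language) := {
  dom :> Type;
  dom_inh : inhabited dom;
  interp_f : forall f : fsym L, (Fin.t (fari L f) -> dom) -> dom;
  interp_r : forall r : rsym L, (Fin.t (rari L r) -> dom) -> Prop
}.

Definition upd (M : Type) (v : nat -> M) (x : nat) (a : M) : nat -> M :=
  fun y => if PeanoNat.Nat.eqb y x then a else v y.

Fixpoint eval L (M : structure L) (v : nat -> M) (t : term L) : M :=
  match t with
  | tvar x => v x
  | tapp f ts => interp_f M f (fun i => eval M v (ts i))
  end.

(** Satisfaction under an assignment (assignments = parameters). *)
Fixpoint sat L (M : structure L) (v : nat -> M) (phi : formula L) : Prop :=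
  match phi with
  | fEq t u => eval M v t = eval M v u
  | fRel r ts => interp_r M r (fun i => eval M v (ts i))
  | fTrue => True
  | fFalse => False
  | fNot p => ~ sat M v p
  | fAnd p q => sat M v p /\ sat M v q
  | fOr p q => sat M v p \/ sat M v q
  | fImp p q => sat M v p -> sat M v q
  | fEx x p => exists a : M, sat M (upd v x a) p
  | fAll x p => forall a : M, sat M (upd v x a) p
  end.

Definition theory (L : language) := formula L -> Prop.

Definition is_model L (T : theory L) (M : structure L) : Prop :=
  forall phi, T phi -> forall v : nat -> M, sat M v phi.

Definition homomorphism {L} {A B : structure L} (h : A -> B) : Prop :=
  (forall f (args : Fin.t (fari L f) -> A),
      h (interp_f A f args) = interp_f B f (fun i => h (args i))) /\
  (forall r (args : Fin.t (rari L r) -> A),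
      interp_r A r args -> interp_r B r (fun i => h (args i))).

Definition elementary {L} {A B : structure L} (h : A -> B) : Prop :=
  forall (phi : formula L) (v : nat -> A),
    sat A v phi <-> sat B (fun x => h (v x)) phi.

Fixpoint pos_qf L (phi : formula L) : Prop :=
  match phi with
  | fEq _ _ | fRel _ _ | fTrue | fFalse => True
  | fAnd p q | fOr p q => pos_qf p /\ pos_qf q
  | _ => False
  end.

Fixpoint pos_ex L (phi : formula L) : Prop :=
  match phi with
  | fEx _ p => pos_ex p
  | p => pos_qf p
  end.

Definition immersion {L} {A B : structure L} (h : A -> B) : Prop :=
  forall (phi : formula L) (v : nat -> A), pos_ex phi ->
    sat B (fun x => h (v x)) phi -> sat A v phi.

Definition pos_model_complete L (T : theory L) : Prop :=
  forall (A B : structure L) (h : A -> B),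
    is_model T A -> is_model T B -> homomorphism h -> immersion h.

From Stdlib Require Import Arith Lia Classical ClassicalEpsilon
  FunctionalExtensionality PropExtensionality ProofIrrelevance.
From mathcomp Require filter.

(* Classically, only the reflection of [∃x φ] along a homomorphism
   h : A -> B of models of T needs an argument. By positive model completeness
   h is an immersion, and an immersion factors an elementary map: some
   ultrapower C of A, with its elementary diagonal d : A -> C, carries a
   homomorphism g : B -> C with g ∘ h = d. The ultrapower is indexed by the
   positive quantifier-free facts true in B. Quantifying such a fact
   existentially over its parameters outside h(A) and reflecting it through h
   yields a solution s : B -> A of the fact that fixes h(A); taking for g b the
   class of the values of the solutions at b, Łoś's theorem makes g preserve
   every fact. A witness b of φ in B then gives the witness g b in C, and d
   reflects [∃x φ] back to A. *)

Section Semantics.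
Context {L : language}.

Lemma eval_hom (A B : structure L) (h : A -> B) (v : nat -> A) (t : term L) :
  homomorphism h -> h (eval A v t) = eval B (fun x => h (v x)) t.
Proof.
  intros [hom_f _]. induction t as [x | f ts IH]; simpl; auto.
  rewrite hom_f. f_equal. apply functional_extensionality. auto.
Qed.

Lemma homomorphism_preserves_pos_qf (A B : structure L) (h : A -> B) v phi :
  homomorphism h -> pos_qf phi -> sat A v phi -> sat B (fun x => h (v x)) phi.
Proof.
  intros hom. induction phi; simpl; try tauto.
  - intros _ E. rewrite <- !eval_hom by exact hom. congruence.
  - intros _ R. destruct hom as [hom_f hom_r].
    replace (fun i => eval B (fun x => h (v x)) (t i)) with (fun i => h (eval A v (t i))).
    + apply hom_r, R.
    + apply functional_extensionality. intro. apply eval_hom. split; assumption.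
Qed.

Lemma comp_upd (X Y : Type) (h : X -> Y) (v : nat -> X) x a :
  (fun y => h (upd v x a y)) = upd (fun y => h (v y)) x (h a).
Proof.
  apply functional_extensionality. intro y. unfold upd. now destruct (Nat.eqb y x).
Qed.

Definition equivalent (phi psi : formula L) : Prop :=
  forall (M : structure L) (v : nat -> M), sat M v phi <-> sat M v psi.

Lemma formula_ind_classical (P : formula L -> Prop) :
  (forall phi psi, equivalent phi psi -> P phi -> P psi) ->
  (forall t u, P (fEq t u)) ->
  (forall r ts, P (fRel r ts)) ->
  P fTrue ->
  (forall phi, P phi -> P (fNot phi)) ->
  (forall phi psi, P phi -> P psi -> P (fAnd phi psi)) ->
  (forall x phi, P phi -> P (fEx x phi)) ->
  forall phi, P phi.
Proof.
  intros P_equiv P_eq P_rel P_true P_not P_and P_ex.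
  induction phi as [| | | | phi IH | phi IH psi IH' | phi IH psi IH'
                    | phi IH psi IH' | x phi IH | x phi IH]; auto.
  - apply (P_equiv (fNot fTrue)); auto. intros M v. simpl. tauto.
  - apply (P_equiv (fNot (fAnd (fNot phi) (fNot psi)))); auto.
    intros M v. simpl. destruct (classic (sat M v phi)); tauto.
  - apply (P_equiv (fNot (fAnd phi (fNot psi)))); auto.
    intros M v. simpl. destruct (classic (sat M v psi)); tauto.
  - apply (P_equiv (fNot (fEx x (fNot phi)))); auto.
    intros M v. simpl. split.
    + intros H a. apply NNPP. intro Ha. eauto.
    + intros H [a Ha]. auto.
Qed.

Fixpoint term_below (n : nat) (t : term L) : Prop :=
  match t with
  | tvar x => x < n
  | tapp f ts => forall k, term_below n (ts k)
  end.

Fixpoint qf_below (n : nat) (phi : formula L) : Prop :=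
  match phi with
  | fEq t u => term_below n t /\ term_below n u
  | fRel r ts => forall k, term_below n (ts k)
  | fTrue | fFalse => True
  | fNot p => qf_below n p
  | fAnd p q | fOr p q | fImp p q => qf_below n p /\ qf_below n q
  | fEx _ _ | fAll _ _ => False
  end.

Lemma eval_below (M : structure L) (v v' : nat -> M) n t :
  term_below n t -> (forall x, x < n -> v x = v' x) -> eval M v t = eval M v' t.
Proof.
  intros t_below agree. induction t as [x | f ts IH]; simpl in *; auto.
  f_equal. apply functional_extensionality. auto.
Qed.

Lemma sat_below (M : structure L) (v v' : nat -> M) n phi :
  qf_below n phi -> (forall x, x < n -> v x = v' x) -> (sat M v phi <-> sat M v' phi).
Proof.
  intros phi_below agree. induction phi; simpl in *; try tauto.
  - rewrite (eval_below M v v' n t), (eval_below M v v' n t0); tauto.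
  - replace (fun i => eval M v (t i)) with (fun i => eval M v' (t i)); [tauto |].
    apply functional_extensionality. intro k. symmetry. apply (eval_below M v v' n); auto.
  all: first [rewrite IHphi | rewrite IHphi1, IHphi2]; tauto.
Qed.

Lemma term_below_mono n m t : n <= m -> term_below n t -> term_below m t.
Proof. intros le_nm. induction t; simpl; auto. lia. Qed.

Lemma qf_below_mono n m phi : n <= m -> qf_below n phi -> qf_below m phi.
Proof.
  intros le_nm. induction phi; simpl; try tauto.
  - intros []. split; eapply term_below_mono; eauto.
  - intros ts_below k. eapply term_below_mono; eauto.
Qed.

Fixpoint rename_term (rho : nat -> nat) (t : term L) : term L :=
  match t with
  | tvar x => tvar (rho x)
  | tapp f ts => tapp f (fun k => rename_term rho (ts k))
  end.

(* Not capture-avoiding under quantifiers: only meant for quantifier-free formulas. *)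
Fixpoint rename (rho : nat -> nat) (phi : formula L) : formula L :=
  match phi with
  | fEq t u => fEq (rename_term rho t) (rename_term rho u)
  | fRel r ts => fRel r (fun k => rename_term rho (ts k))
  | fTrue => fTrue
  | fFalse => fFalse
  | fNot p => fNot (rename rho p)
  | fAnd p q => fAnd (rename rho p) (rename rho q)
  | fOr p q => fOr (rename rho p) (rename rho q)
  | fImp p q => fImp (rename rho p) (rename rho q)
  | fEx x p => fEx x (rename rho p)
  | fAll x p => fAll x (rename rho p)
  end.

Lemma eval_rename (M : structure L) v rho t :
  eval M v (rename_term rho t) = eval M (fun x => v (rho x)) t.
Proof.
  induction t; simpl; auto. f_equal. apply functional_extensionality. auto.
Qed.

Lemma sat_rename (M : structure L) v rho phi :
  pos_qf phi -> (sat M v (rename rho phi) <-> sat M (fun x => v (rho x)) phi).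
Proof.
  induction phi; simpl; intros phi_pos; try tauto.
  - rewrite !eval_rename. tauto.
  - replace (fun i => eval M v (rename_term rho (t i)))
      with (fun i => eval M (fun x => v (rho x)) (t i)); [tauto |].
    apply functional_extensionality. intro. apply eq_sym, eval_rename.
Qed.

Lemma pos_qf_rename rho phi : pos_qf phi -> pos_qf (rename rho phi).
Proof. induction phi; simpl; tauto. Qed.

Lemma term_below_rename n m rho t :
  (forall x, x < n -> rho x < m) -> term_below n t -> term_below m (rename_term rho t).
Proof. intros rho_below. induction t; simpl; auto. Qed.

Lemma qf_below_rename n m rho phi :
  (forall x, x < n -> rho x < m) -> qf_below n phi -> qf_below m (rename rho phi).
Proof.
  intros rho_below. induction phi; simpl; try tauto.
  - intros []. split; eapply term_below_rename; eauto.
  - intros ts_below k. eapply term_below_rename; eauto.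
Qed.

Definition shift {X : Type} (n : nat) (w1 w2 : nat -> X) : nat -> X :=
  fun y => if y <? n then w1 y else w2 (y - n).

Lemma sat_and_shift (M : structure L) {X : Type} (k : X -> M) n phi psi (w1 w2 : nat -> X) :
  qf_below n phi -> pos_qf psi ->
  sat M (fun y => k (shift n w1 w2 y)) (fAnd phi (rename (Nat.add n) psi)) <->
  sat M (fun y => k (w1 y)) phi /\ sat M (fun y => k (w2 y)) psi.
Proof.
  intros phi_below psi_pos. simpl. rewrite sat_rename by exact psi_pos.
  rewrite (sat_below M _ (fun y => k (w1 y)) n phi phi_below).
  - replace (fun x => k (shift n w1 w2 (n + x))) with (fun y => k (w2 y)); [tauto |].
    apply functional_extensionality. intro y. unfold shift.
    destruct (Nat.ltb_spec (n + y) n); [lia |]. do 3 f_equal. lia.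
  - intros y y_lt. unfold shift. destruct (Nat.ltb_spec y n); [reflexivity | lia].
Qed.

Lemma qf_below_and_shift n m phi psi :
  qf_below n phi -> qf_below m psi -> qf_below (n + m) (fAnd phi (rename (Nat.add n) psi)).
Proof.
  intros phi_below psi_below. split.
  - apply (qf_below_mono n); [lia | exact phi_below].
  - apply (qf_below_rename m); [intros; lia | exact psi_below].
Qed.

Fixpoint exs (n : nat) (phi : formula L) : formula L :=
  match n with
  | 0 => phi
  | S m => exs m (fEx m phi)
  end.

Lemma pos_ex_exs n phi : pos_qf phi -> pos_ex (exs n phi).
Proof.
  intros phi_pos. assert (phi_ex : pos_ex phi) by (destruct phi; simpl in *; tauto).
  clear phi_pos. revert phi phi_ex. induction n; simpl; auto.
Qed.

Lemma sat_exs (M : structure L) n : forall phi (v : nat -> M),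
  sat M v (exs n phi) <-> exists u, (forall y, n <= y -> u y = v y) /\ sat M u phi.
Proof.
  induction n as [| n IH]; simpl; intros phi v.
  - split.
    + intros H. exists v. auto.
    + intros [u [agree H]].
      replace v with u; auto. apply functional_extensionality. intro. apply agree. lia.
  - rewrite IH. simpl. split.
    + intros [u [agree [a H]]]. exists (upd u n a). split; auto.
      intros y y_ge. unfold upd. destruct (Nat.eqb_spec y n); [lia |]. apply agree. lia.
    + intros [u [agree H]]. exists (upd u n (v n)). split.
      * intros y y_ge. unfold upd.
        destruct (Nat.eqb_spec y n); subst; auto. apply agree. lia.
      * exists (u n). replace (upd (upd u n (v n)) n (u n)) with u; auto.
        apply functional_extensionality. intro y. unfold upd.
        destruct (Nat.eqb_spec y n); congruence.
Qed.

Definition args_assignment {X : Type} (m : nat) (args : Fin.t m -> X) (x : X) : nat -> X :=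
  fun j => match lt_dec j m with
           | left j_lt => args (Fin.of_nat_lt j_lt)
           | right _ => x
           end.

Definition arg_vars (m : nat) : Fin.t m -> term L :=
  fun k => tvar (proj1_sig (Fin.to_nat k)).

Lemma eval_arg_vars (M : structure L) m args x (k : Fin.t m) :
  eval M (args_assignment m args x) (arg_vars m k) = args k.
Proof.
  simpl. unfold args_assignment. destruct (lt_dec _ m) as [lt | ge].
  - now rewrite (Fin.of_nat_ext lt (proj2_sig (Fin.to_nat k))), Fin.of_nat_to_nat_inv.
  - destruct ge. apply proj2_sig.
Qed.

Lemma arg_vars_below m k : term_below m (arg_vars m k).
Proof. simpl. apply proj2_sig. Qed.

Lemma homomorphism_of_preserves_pos_qf (M N : structure L) (g : M -> N) :
  (forall n phi (w : nat -> M), pos_qf phi -> qf_below n phi ->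
     sat M w phi -> sat N (fun y => g (w y)) phi) ->
  homomorphism g.
Proof.
  intros preserves. split.
  - intros f args.
    set (m := fari L f).
    set (w := args_assignment m args (interp_f M f args)).
    assert (w_m : w m = interp_f M f args).
    { unfold w, args_assignment. destruct (lt_dec m m); [lia | reflexivity]. }
    assert (fun_preserved :
      sat N (fun y => g (w y)) (fEq (tvar m) (tapp f (arg_vars m)))).
    { apply (preserves (S m)).
      - exact I.
      - split; [simpl; lia |]. intro k.
        apply (term_below_mono m); [lia | apply arg_vars_below].
      - simpl. rewrite w_m. f_equal. apply functional_extensionality. intro k.
        symmetry. apply eval_arg_vars. }
    simpl in fun_preserved. rewrite w_m in fun_preserved. rewrite fun_preserved.
    f_equal. apply functional_extensionality. intro k.
    exact (f_equal g (eval_arg_vars M m args _ k)).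
  - intros r args holds. destruct (dom_inh M) as [x].
    set (w := args_assignment (rari L r) args x).
    assert (rel_preserved : sat N (fun y => g (w y)) (fRel r (arg_vars (rari L r)))).
    { apply (preserves (rari L r)).
      - exact I.
      - intro k. apply arg_vars_below.
      - change (interp_r M r (fun i => eval M w (arg_vars (rari L r) i))).
        replace (fun i => eval M w (arg_vars (rari L r) i)) with args; [exact holds |].
        apply functional_extensionality. intro k. symmetry. apply eval_arg_vars. }
    simpl in rel_preserved.
    replace (fun i => g (args i)) with (fun i => g (eval M w (arg_vars (rari L r) i)));
      [exact rel_preserved |].
    apply functional_extensionality. intro k. exact (f_equal g (eval_arg_vars M _ args x k)).
Qed.

End Semantics.

Section Ultrapower.
Context {L : language} (A : structure L) (I : Type) (U : (I -> Prop) -> Prop).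
Context (U_ultra : filter.UltraFilter U).

Lemma ultra_and (X Y : I -> Prop) : U (fun i => X i /\ Y i) <-> U X /\ U Y.
Proof.
  split.
  - intros XY.
    split; (apply (filter.filterS (P := fun i => X i /\ Y i)); [intros i []; auto | exact XY]).
  - intros [UX UY]. apply filter.filterI; assumption.
Qed.

Lemma ultra_not (X : I -> Prop) : U (fun i => ~ X i) <-> ~ U X.
Proof.
  split.
  - intros UnX UX.
    destruct (filter.filter_ex (proj2 (ultra_and _ _) (conj UX UnX))) as [i []].
    contradiction.
  - intros nUX. destruct (filter.in_ultra_setVsetC X U_ultra); tauto.
Qed.

Lemma ultra_all (X : I -> Prop) : (forall i, X i) -> U X.
Proof.
  intros all_X. apply (filter.filterS (P := fun _ => True)); [| apply filter.filterT].
  intros i _. apply all_X.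
Qed.

Definition ueq (g g' : I -> A) : Prop := U (fun i => g i = g' i).

Lemma ueq_refl g : ueq g g.
Proof. apply ultra_all. reflexivity. Qed.

Lemma ueq_sym g g' : ueq g g' -> ueq g' g.
Proof. unfold ueq. apply filter.filterS. intros i E. auto. Qed.

Lemma ueq_trans g1 g2 g3 : ueq g1 g2 -> ueq g2 g3 -> ueq g1 g3.
Proof.
  intros E12 E23. unfold ueq.
  apply (filter.filterS (P := fun i => g1 i = g2 i /\ g2 i = g3 i)).
  - intros i []. congruence.
  - apply ultra_and. split; assumption.
Qed.

Definition ucanon (g : I -> A) : I -> A :=
  epsilon (inhabits g) (fun g' => ueq g' g).

Lemma ueq_ucanon g : ueq (ucanon g) g.
Proof. apply (epsilon_spec (inhabits g) (fun g' => ueq g' g)). exists g. apply ueq_refl. Qed.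

Lemma ucanon_ueq g g' : ueq g g' -> ucanon g = ucanon g'.
Proof.
  intros E. unfold ucanon.
  replace (fun g'' => ueq g'' g') with (fun g'' => ueq g'' g).
  - f_equal. apply proof_irrelevance.
  - apply functional_extensionality. intro g''.
    apply propositional_extensionality. split; intro E'.
    + eapply ueq_trans; eauto.
    + eapply ueq_trans; eauto. apply ueq_sym; assumption.
Qed.

Definition uclass : Type := { g : I -> A | ucanon g = g }.

Definition uclass_of (g : I -> A) : uclass :=
  exist _ (ucanon g) (ucanon_ueq _ _ (ueq_ucanon g)).

Definition urep (c : uclass) : I -> A := proj1_sig c.

Lemma uclass_of_eq g g' : uclass_of g = uclass_of g' <-> ueq g g'.
Proof.
  split.
  - intros E. apply (f_equal urep) in E. simpl in E.
    apply (ueq_trans _ (ucanon g)); [apply ueq_sym, ueq_ucanon |].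
    rewrite E. apply ueq_ucanon.
  - intros E. unfold uclass_of. apply eq_sig_hprop; [intros; apply proof_irrelevance |].
    apply ucanon_ueq, E.
Qed.

Lemma ueq_urep g : ueq (urep (uclass_of g)) g.
Proof. apply ueq_ucanon. Qed.

Lemma uclass_of_urep c : uclass_of (urep c) = c.
Proof.
  destruct c as [g canon_g]. apply eq_sig_hprop; [intros; apply proof_irrelevance |].
  exact canon_g.
Qed.

Lemma ultra_forall_fin n (P : Fin.t n -> I -> Prop) :
  (forall k, U (P k)) -> U (fun i => forall k, P k i).
Proof.
  induction n as [| n IH]; intros all_P.
  - apply ultra_all. intros i k. apply (Fin.case0 (fun k => P k i) k).
  - apply (filter.filterS (P := fun i => P Fin.F1 i /\ forall k, P (Fin.FS k) i)).
    + intros i [P1 PS] k. apply (Fin.caseS' k (fun k => P k i)); auto.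
    + apply ultra_and. split; [auto | apply (IH (fun k => P (Fin.FS k))); auto].
Qed.

Definition ultrapower : structure L := {|
  dom := uclass;
  dom_inh := match dom_inh A with inhabits a => inhabits (uclass_of (fun _ => a)) end;
  interp_f := fun f args => uclass_of (fun i => interp_f A f (fun k => urep (args k) i));
  interp_r := fun r args => U (fun i => interp_r A r (fun k => urep (args k) i))
|}.

Lemma ultra_urep_args n (G : Fin.t n -> I -> A) :
  U (fun i => forall k, urep (uclass_of (G k)) i = G k i).
Proof. apply ultra_forall_fin. intro k. apply ueq_urep. Qed.

Lemma ultrapower_interp_f f (G : Fin.t (fari L f) -> I -> A) :
  interp_f ultrapower f (fun k => uclass_of (G k)) =
  uclass_of (fun i => interp_f A f (fun k => G k i)).
Proof.
  apply uclass_of_eq. unfold ueq.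
  apply (filter.filterS (P := fun i => forall k, urep (uclass_of (G k)) i = G k i));
    [| apply ultra_urep_args].
  intros i E. f_equal. apply functional_extensionality. exact E.
Qed.

Lemma ultrapower_interp_r r (G : Fin.t (rari L r) -> I -> A) :
  interp_r ultrapower r (fun k => uclass_of (G k)) <->
  U (fun i => interp_r A r (fun k => G k i)).
Proof.
  simpl. split; intros H;
    (eapply filter.filterS; [| apply ultra_and; split; [exact H | apply (ultra_urep_args _ G)]]);
    intros i [R E]; apply functional_extensionality in E; simpl in *; congruence.
Qed.

Definition represents (uu : I -> nat -> A) (v : nat -> ultrapower) : Prop :=
  forall x, v x = uclass_of (fun i => uu i x).

Lemma represents_upd uu v x (g : I -> A) :
  represents uu v ->
  represents (fun i => upd (uu i) x (g i)) (upd v x (uclass_of g)).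
Proof. intros rep y. unfold upd. destruct (Nat.eqb y x); auto. Qed.

Lemma ultrapower_eval uu v t :
  represents uu v -> eval ultrapower v t = uclass_of (fun i => eval A (uu i) t).
Proof.
  intros rep. induction t as [x | f ts IH]; [apply rep |].
  change (interp_f ultrapower f (fun k => eval ultrapower v (ts k)) =
          uclass_of (fun i => interp_f A f (fun k => eval A (uu i) (ts k)))).
  rewrite <- ultrapower_interp_f. f_equal. apply functional_extensionality. exact IH.
Qed.

Definition los_holds (phi : formula L) : Prop :=
  forall uu v, represents uu v -> (sat ultrapower v phi <-> U (fun i => sat A (uu i) phi)).

Lemma los_ex x phi : los_holds phi -> los_holds (fEx x phi).
Proof.
  intros los_phi uu v rep. simpl. split.
  - intros [c holds]. rewrite <- (uclass_of_urep c) in holds.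
    apply (los_phi _ _ (represents_upd uu v x (urep c) rep)) in holds.
    apply (filter.filterS (P := fun i => sat A (upd (uu i) x (urep c i)) phi)); [| exact holds].
    intros i H. eauto.
  - intros holds.
    set (g i := epsilon (dom_inh A) (fun a => sat A (upd (uu i) x a) phi)).
    exists (uclass_of g). apply (los_phi _ _ (represents_upd uu v x g rep)).
    apply (filter.filterS (P := fun i => exists a, sat A (upd (uu i) x a) phi)); [| exact holds].
    intros i H. exact (epsilon_spec _ _ H).
Qed.

Theorem los : forall phi, los_holds phi.
Proof.
  apply formula_ind_classical.
  - intros phi psi equiv los_phi uu v rep.
    rewrite <- (equiv ultrapower v), (los_phi uu v rep).
    split; apply filter.filterS; intro i; apply equiv.
  - intros t u uu v rep. simpl.
    rewrite !(ultrapower_eval uu v) by exact rep. apply uclass_of_eq.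
  - intros r ts uu v rep.
    change (interp_r ultrapower r (fun k => eval ultrapower v (ts k)) <->
            U (fun i => interp_r A r (fun k => eval A (uu i) (ts k)))).
    rewrite <- ultrapower_interp_r.
    replace (fun k => eval ultrapower v (ts k))
      with (fun k => uclass_of (fun i => eval A (uu i) (ts k))); [apply iff_refl |].
    apply functional_extensionality. intro k. symmetry. apply ultrapower_eval, rep.
  - intros uu v rep. simpl. split; [intros _ | trivial]. apply ultra_all. trivial.
  - intros phi los_phi uu v rep. simpl. rewrite (los_phi uu v rep), ultra_not. tauto.
  - intros phi psi los_phi los_psi uu v rep. simpl.
    rewrite (los_phi uu v rep), (los_psi uu v rep), ultra_and. tauto.
  - apply los_ex.
Qed.

Definition diagonal (a : A) : ultrapower := uclass_of (fun _ => a).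

Lemma diagonal_elementary : elementary diagonal.
Proof.
  intros phi v. rewrite (los phi (fun _ => v)) by (intro; reflexivity). split.
  - intros holds. apply ultra_all. intros _. exact holds.
  - intros holds. destruct (filter.filter_ex holds). assumption.
Qed.

Lemma ultrapower_model (T : theory L) : is_model T A -> is_model T ultrapower.
Proof.
  intros A_model phi T_phi v.
  apply (los phi (fun i x => urep (v x) i)).
  - intro x. symmetry. apply uclass_of_urep.
  - apply ultra_all. intros i. apply A_model, T_phi.
Qed.

End Ultrapower.

Lemma immersion_injective {L : language} {A B : structure L} (h : A -> B) :
  immersion h -> forall a a', h a = h a' -> a = a'.
Proof.
  intros imm a a' E.
  exact (imm (fEq (tvar 0) (tvar 1)) (fun x => if Nat.eqb x 0 then a else a') I E).
Qed.

Section Amalgamation.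
Context {L : language} {A B : structure L} (h : A -> B) (h_imm : immersion h).

Definition in_range (b : B) : Prop := exists a, h a = b.

Definition preimage (b : B) : A := epsilon (dom_inh A) (fun a => h a = b).

Lemma h_preimage b : in_range b -> h (preimage b) = b.
Proof. exact (epsilon_spec _ (fun a => h a = b)). Qed.

Lemma preimage_h a : preimage (h a) = a.
Proof. apply (immersion_injective h h_imm), h_preimage. exists a. reflexivity. Qed.

Section Solution.
Variables (n : nat) (w : nat -> B).

Definition index_of (b : B) : nat := epsilon (inhabits 0) (fun j => j < n /\ w j = b).

Lemma index_of_spec j : j < n -> index_of (w j) < n /\ w (index_of (w j)) = w j.
Proof.
  intros j_lt. apply (epsilon_spec _ (fun j' => j' < n /\ w j' = w j)). exists j. auto.
Qed.

(* Variable [j < n] goes to the parameter slot [n + j] when [w j] lies in the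
   range of [h], and otherwise to a variable determined by the value [w j], so
   that a solution can be read off as a function of the values of [w]. *)
Definition slot (j : nat) : nat :=
  if excluded_middle_informative (in_range (w j)) then n + j else index_of (w j).

Lemma pos_qf_solvable phi :
  pos_qf phi -> qf_below n phi -> sat B w phi ->
  exists s : B -> A, (forall a, s (h a) = a) /\ sat A (fun y => s (w y)) phi.
Proof.
  intros phi_pos phi_below holds.
  set (params y := preimage (w (y - n))).
  assert (in_B : sat B (fun y => h (params y)) (exs n (rename slot phi))).
  { apply sat_exs. exists (shift n w (fun j => h (preimage (w j)))). split.
    - intros y y_ge. unfold shift. destruct (Nat.ltb_spec y n); [lia | reflexivity].
    - apply sat_rename; [exact phi_pos |].
      apply (sat_below B _ w n phi phi_below); [| exact holds].
      intros j j_lt. unfold slot, shift.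
      destruct (excluded_middle_informative (in_range (w j))) as [ran | not_ran].
      + destruct (Nat.ltb_spec (n + j) n); [lia |].
        replace (n + j - n) with j by lia. apply h_preimage, ran.
      + destruct (index_of_spec j j_lt) as [idx_lt idx_w].
        destruct (Nat.ltb_spec (index_of (w j)) n); [exact idx_w | lia]. }
  apply h_imm in in_B; [| apply pos_ex_exs, pos_qf_rename, phi_pos].
  apply sat_exs in in_B. destruct in_B as [u [u_params in_A]].
  apply (sat_rename A u slot phi phi_pos) in in_A.
  exists (fun b => if excluded_middle_informative (in_range b) then preimage b
                   else u (index_of b)).
  split.
  - intros a. destruct (excluded_middle_informative (in_range (h a))) as [_ | not_ran].
    + apply preimage_h.
    + destruct not_ran. exists a. reflexivity.
  - apply (sat_below A _ (fun j => u (slot j)) n phi phi_below); [| exact in_A].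
    intros j j_lt. unfold slot.
    destruct (excluded_middle_informative (in_range (w j))); [| reflexivity].
    rewrite u_params by lia. unfold params. do 2 f_equal. lia.
Qed.

End Solution.

Record pos_fact := {
  fact_size : nat;
  fact_formula : formula L;
  fact_params : nat -> B;
  fact_pos : pos_qf fact_formula;
  fact_below : qf_below fact_size fact_formula;
  fact_holds : sat B fact_params fact_formula }.

Definition solves (s : B -> A) (f : pos_fact) : Prop :=
  sat A (fun y => s (fact_params f y)) (fact_formula f).

Definition solution (f : pos_fact) : B -> A :=
  proj1_sig (constructive_indefinite_description _
    (pos_qf_solvable (fact_size f) (fact_params f) (fact_formula f)
       (fact_pos f) (fact_below f) (fact_holds f))).

Lemma solution_h f a : solution f (h a) = a.
Proof.
  unfold solution. destruct constructive_indefinite_description as [s s_spec]. apply s_spec.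
Qed.

Lemma solution_solves f : solves (solution f) f.
Proof.
  unfold solution. destruct constructive_indefinite_description as [s s_spec]. apply s_spec.
Qed.

Lemma pos_fact_and (f1 f2 : pos_fact) :
  exists f, forall s, solves s f -> solves s f1 /\ solves s f2.
Proof.
  destruct f1 as [n1 phi1 w1 pos1 below1 holds1], f2 as [n2 phi2 w2 pos2 below2 holds2].
  assert (and_pos : pos_qf (fAnd phi1 (rename (Nat.add n1) phi2)))
    by (split; [| apply pos_qf_rename]; assumption).
  assert (and_holds : sat B (shift n1 w1 w2) (fAnd phi1 (rename (Nat.add n1) phi2)))
    by (apply (sat_and_shift B (fun b => b)); auto).
  exists (Build_pos_fact _ _ _ and_pos
            (qf_below_and_shift n1 n2 phi1 phi2 below1 below2) and_holds).
  intros s. apply (sat_and_shift A s); assumption.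
Qed.

Definition solved_by (f : pos_fact) : pos_fact -> Prop := fun i => solves (solution i) f.

Lemma solutions_ultrafilter :
  exists U, filter.UltraFilter U /\ forall f, U (solved_by f).
Proof.
  set (base (S : pos_fact -> Prop) := exists f, forall i, solved_by f i -> S i).
  assert (base_proper : filter.ProperFilter base).
  { apply filter.Build_ProperFilter_ex.
    - intros S [f sub]. exists f. apply sub, solution_solves.
    - constructor.
      + destruct (dom_inh B) as [b].
        exists (Build_pos_fact 0 fTrue (fun _ => b) I I I). intros; exact I.
      + intros S1 S2 [f1 sub1] [f2 sub2]. destruct (pos_fact_and f1 f2) as [f sub].
        exists f. intros i solved. destruct (sub _ solved). split; auto.
      + intros S1 S2 S12 [f sub]. exists f. auto. }
  destruct (filter.ultraFilterLemma base_proper) as [U [U_ultra base_U]].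
  exists U. split; [exact U_ultra |]. intro f. apply base_U. exists f. auto.
Qed.

Theorem immersion_amalgamation :
  exists (C : structure L) (d : A -> C) (g : B -> C),
    elementary d /\ homomorphism g /\ (forall a, g (h a) = d a) /\
    (forall T, is_model T A -> is_model T C).
Proof.
  destruct solutions_ultrafilter as [U [U_ultra solved]].
  exists (ultrapower A pos_fact U U_ultra), (diagonal A pos_fact U U_ultra),
    (fun b => uclass_of A pos_fact U U_ultra (fun i => solution i b)).
  split; [apply diagonal_elementary |]. split; [| split].
  - apply homomorphism_of_preserves_pos_qf. intros n phi w phi_pos phi_below holds.
    apply (los A pos_fact U U_ultra phi (fun i y => solution i (w y))); [intro; reflexivity |].
    exact (solved (Build_pos_fact n phi w phi_pos phi_below holds)).
  - intros a. apply uclass_of_eq, (ultra_all pos_fact U U_ultra). intros i. apply solution_h.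
  - intros T. apply ultrapower_model.
Qed.

End Amalgamation.

Section PositivelyModelComplete.
Context {L : language} (T : theory L) (T_pmc : pos_model_complete T).

Definition model_homs_preserve (phi : formula L) : Prop :=
  forall (A B : structure L) (h : A -> B), is_model T A -> is_model T B -> homomorphism h ->
  forall v, sat A v phi <-> sat B (fun x => h (v x)) phi.

Lemma model_homs_preserve_pos_qf phi : pos_qf phi -> model_homs_preserve phi.
Proof.
  intros phi_pos A B h A_model B_model h_hom v. split.
  - apply homomorphism_preserves_pos_qf; assumption.
  - apply (T_pmc A B h A_model B_model h_hom phi v). destruct phi; simpl in *; tauto.
Qed.

Lemma model_homs_preserve_ex x phi :
  model_homs_preserve phi -> model_homs_preserve (fEx x phi).
Proof.
  intros preserve A B h A_model B_model h_hom v. simpl. split.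
  - intros [a holds]. exists (h a). rewrite <- comp_upd. apply preserve; assumption.
  - intros [b holds].
    destruct (immersion_amalgamation h (T_pmc A B h A_model B_model h_hom))
      as [C [d [g [d_elem [g_hom [g_h C_model]]]]]].
    apply (preserve B C g B_model (C_model T A_model) g_hom) in holds.
    rewrite comp_upd in holds.
    apply (d_elem (fEx x phi) v). exists (g b).
    replace (fun y => d (v y)) with (fun y => g (h (v y))); [exact holds |].
    apply functional_extensionality. intro. apply g_h.
Qed.

Theorem model_homs_elementary : forall phi, model_homs_preserve phi.
Proof.
  apply formula_ind_classical.
  - intros phi psi equiv preserve A B h A_model B_model h_hom v.
    rewrite <- (equiv A v), <- (equiv B). apply preserve; assumption.
  - intros t u. apply model_homs_preserve_pos_qf. exact I.
  - intros r ts. apply model_homs_preserve_pos_qf. exact I.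
  - apply model_homs_preserve_pos_qf. exact I.
  - intros phi preserve A B h A_model B_model h_hom v. simpl.
    rewrite (preserve A B h A_model B_model h_hom v). tauto.
  - intros phi psi preserve_phi preserve_psi A B h A_model B_model h_hom v. simpl.
    rewrite (preserve_phi A B h A_model B_model h_hom v),
            (preserve_psi A B h A_model B_model h_hom v). tauto.
  - apply model_homs_preserve_ex.
Qed.

End PositivelyModelComplete.

(* Models satisfy [T] under every assignment. *)
Theorem lemma4p5 (L : language) (T : theory L) :
  (forall phi, T phi -> sentence phi) ->
  pos_model_complete T ->
  forall (A B : structure L) (h : A -> B),
    is_model T A -> is_model T B -> homomorphism h -> elementary h.
Proof.
  intros _ T_pmc A B h A_model B_model h_hom phi v.
  exact (model_homs_elementary T T_pmc phi A B h A_model B_model h_hom v).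
Qed.
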